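(* Let $\mathcal A\subseteq 2^\Pi\setminus\{\emptyset\}$ be a symmetric adversary. Then $\mathit{setcon}(\mathcal A)=|\{k\in\{1,\dots,n\}:\exists S\in\mathcal A,\ |S|=k\}|$.
   Context: An adversary is a set $\mathcal A\subseteq 2^\Pi$ of subsets (live sets) of the process set $\Pi=\{p_1,\dots,p_n\}$. It is symmetric if for all $S\in\mathcal A$ and all $S'\subseteq\Pi$ with $|S'|=|S|$, $S'\in\mathcal A$. $\mathcal A|_P=\{S\in\mathcal A: S\subseteq P\}$. The set consensus power is defined recursively by $\mathit{setcon}(\emptyset)=0$ and, for $\mathcal A\ne\emptyset$, $\mathit{setcon}(\mathcal A)=\max_{S\in\mathcal A}\min_{a\in S}\mathit{setcon}(\mathcal A|_{S\setminus\{a\}})+1$. *)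

From mathcomp Require Import all_boot.
Set Implicit Arguments. Unset Strict Implicit. Unset Printing Implicit Defensive.

(* Processes Pi = 'I_n; an adversary is a set of live sets. *)
Definition restrict n (A : {set {set 'I_n}}) (P : {set 'I_n}) : {set {set 'I_n}} :=
  [set S in A | S \subset P].

Definition symmetric_adv n (A : {set {set 'I_n}}) : Prop :=
  forall S S' : {set 'I_n}, S \in A -> #|S'| = #|S| -> S' \in A.

(* setcon_fuel A m P computes setcon(A|_P) when m > #|P| (fuel).
   Note (A|_P)|_Q = A|_Q for Q \subset P, so recursion only tracks P.
   The min over an empty S defaults to 0 (irrelevant when the empty set
   is not a live set). *)
Fixpoint setcon_fuel n (A : {set {set 'I_n}}) (m : nat) (P : {set 'I_n}) : nat :=
  match m with
  | 0 => 0
  | m'.+1 =>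
    if restrict A P == set0 then 0 else
    (\max_(S in restrict A P)
       (if S == set0 then 0 else \big[minn/m]_(a in S) setcon_fuel A m' (S :\ a))).+1
  end.

Definition setcon n (A : {set {set 'I_n}}) : nat := setcon_fuel A n.+1 setT.

From mathcomp Require Import all_boot.

Set Implicit Arguments. Unset Strict Implicit. Unset Printing Implicit Defensive.

(* For a symmetric adversary, A|_P contains a live set of size k iff some live
   set has size k and k <= |P|.  Writing f(p) for the number of live-set sizes
   in 1..p, induction on |P| gives setcon(A|_P) = f(|P|): every removal
   S \ {a} leads to the same value f(|S| - 1), and f(|S| - 1) + 1 = f(|S|) since
   |S| is itself a live-set size; the maximum over S is attained at the largest
   live set inside P, beyond which f is constant up to |P|. *)

Lemma exists_subset_card (T : finType) (P : {set T}) k :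
  k <= #|P| -> exists2 S : {set T}, S \subset P & #|S| = k.
Proof.
elim: k => [|k IH] lt_kP; first by exists set0; rewrite ?sub0set ?cards0.
have [S SP cardS] := IH (ltnW lt_kP).
have /set0Pn [x] : P :\: S != set0.
  by rewrite -card_gt0 cardsD (setIidPr SP) cardS subn_gt0.
rewrite inE => /andP [xNS xP].
by exists (x |: S); rewrite ?subUset ?sub1set ?xP ?SP // cardsU1 xNS cardS.
Qed.

Lemma big_minn_const (I : finType) (P : pred I) c m :
  c <= m -> (exists i, P i) -> \big[minn/m]_(i | P i) c = c.
Proof.
move=> le_cm [i Pi]; rewrite big_const.
have : 0 < #|P| by apply/card_gt0P; exists i.
case: #|P| => // k _; elim: k => [|k /= ->]; last exact: minnn.
exact/minn_idPl.
Qed.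

Lemma bigmax_succ (I : finType) (P : pred I) (F : I -> nat) :
  (exists i, P i) -> \max_(i | P i) (F i).+1 = (\max_(i | P i) F i).+1.
Proof.
case=> i0 Pi0; apply/eqP; rewrite eqn_leq; apply/andP; split.
  by apply/bigmax_leqP => i Pi; rewrite ltnS (leq_bigmax_cond _ Pi).
by rewrite (bigmax_eq_arg i0) //; case: arg_maxnP => // i Pi _; apply: leq_bigmax_cond.
Qed.

Section SymmetricAdversary.
Variables (n : nat) (A : {set {set 'I_n}}).
Hypotheses (A0 : set0 \notin A) (Asym : symmetric_adv A).

Definition live_size k := [exists S in A, #|S| == k].

Definition live_sizes_upto p := \sum_(1 <= k < p.+1) live_size k.

Lemma live_sizes_uptoS p :
  live_sizes_upto p.+1 = live_sizes_upto p + live_size p.+1.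
Proof. by rewrite /live_sizes_upto big_nat_recr. Qed.

Lemma live_sizes_upto_le p : live_sizes_upto p <= p.
Proof.
elim: p => [|p IH]; first by rewrite /live_sizes_upto big_geq.
by rewrite live_sizes_uptoS -addn1 leq_add // leq_b1.
Qed.

Lemma live_sizes_upto_mono : {homo live_sizes_upto : p q / p <= q}.
Proof.
move=> p q /subnK <-; elim: (q - p) => [|d IH] //.
by rewrite addSn live_sizes_uptoS (leq_trans IH) ?leq_addr.
Qed.

Lemma live_sizes_upto_flat p q : p <= q ->
  (forall k, p < k <= q -> ~~ live_size k) ->
  live_sizes_upto q = live_sizes_upto p.
Proof.
move=> /subnK <-; elim: (q - p) => [|d IH] noK //.
rewrite addSn live_sizes_uptoS IH => [|k /andP [lt_pk le_kq]]; last first.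
  by apply: noK; rewrite lt_pk (leq_trans le_kq).
by rewrite (negbTE (noK _ _)) ?addn0 // ltnS leq_addl leqnn.
Qed.

Lemma live_sizeP (P : {set 'I_n}) k :
  live_size k -> k <= #|P| -> exists2 S, S \in restrict A P & #|S| = k.
Proof.
move=> /exists_inP [S SA /eqP cardS] le_kP.
have [S' S'P cardS'] := exists_subset_card le_kP.
by exists S' => //; rewrite inE S'P andbT (Asym SA) // cardS cardS'.
Qed.

Lemma card_restrict_gt0 (P S : {set 'I_n}) : S \in restrict A P -> 0 < #|S|.
Proof. by rewrite inE card_gt0 => /andP [SA _]; apply: contraNneq A0 => <-. Qed.

Lemma card_restrict_le (P S : {set 'I_n}) : S \in restrict A P -> #|S| <= #|P|.
Proof. by rewrite inE => /andP [_ /subset_leq_card]. Qed.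

Lemma live_sizes_upto_restrict (P S : {set 'I_n}) : S \in restrict A P ->
  live_sizes_upto #|S| = (live_sizes_upto #|S|.-1).+1.
Proof.
move=> SAP; have SA : S \in A by move: SAP; rewrite inE => /andP [].
have live_S : live_size #|S| by apply/exists_inP; exists S.
move: live_S (card_restrict_gt0 SAP); case: #|S| => // s live_S _.
by rewrite live_sizes_uptoS live_S addn1.
Qed.

Lemma live_sizes_upto_restrict0 (P : {set 'I_n}) :
  restrict A P = set0 -> live_sizes_upto #|P| = 0.
Proof.
move=> AP0; rewrite (@live_sizes_upto_flat 0) //.
  by rewrite /live_sizes_upto big_geq.
move=> k /andP [_ le_kP]; apply/negP => /live_sizeP /(_ le_kP) [S].
by rewrite AP0 inE.
Qed.

Lemma bigmax_live_sizes_upto (P : {set 'I_n}) : restrict A P != set0 ->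
  \max_(S in restrict A P) live_sizes_upto #|S| = live_sizes_upto #|P|.
Proof.
case/set0Pn=> S0 S0AP.
have [S SAP Smax] := arg_maxnP (fun S : {set 'I_n} => #|S|) S0AP.
apply/eqP; rewrite eqn_leq; apply/andP; split.
  by apply/bigmax_leqP => T /card_restrict_le /live_sizes_upto_mono.
rewrite (@live_sizes_upto_flat #|S|) ?card_restrict_le ?(leq_bigmax_cond _ SAP) //.
move=> k /andP [lt_Sk le_kP]; apply/negP => /live_sizeP /(_ le_kP) [T TAP cardT].
by have := Smax T TAP; rewrite cardT => /(leq_trans lt_Sk); rewrite ltnn.
Qed.

Lemma setcon_fuel_live_sizes m (P : {set 'I_n}) :
  #|P| < m -> setcon_fuel A m P = live_sizes_upto #|P|.
Proof.
elim: m P => [|m IH] P //= lt_Pm.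
case: eqP => [AP0 | /eqP AP0]; first by rewrite live_sizes_upto_restrict0.
rewrite -bigmax_live_sizes_upto // -bigmax_succ; last exact/set0Pn.
apply: eq_bigr => S SAP; rewrite (live_sizes_upto_restrict SAP).
have /negbTE -> : S != set0 by rewrite -card_gt0 (card_restrict_gt0 SAP).
have le_SP := card_restrict_le SAP.
rewrite (eq_bigr (fun=> live_sizes_upto #|S|.-1)) => [|a aS]; last first.
  have cardSa : #|S :\ a| = #|S|.-1 by rewrite (cardsD1 a S) aS.
  rewrite IH cardSa // -ltnS prednK ?(card_restrict_gt0 SAP) //.
  exact: leq_ltn_trans le_SP lt_Pm.
rewrite big_minn_const //; last by apply/card_gt0P; rewrite (card_restrict_gt0 SAP).
rewrite (leq_trans (live_sizes_upto_le _)) // (leq_trans (leq_pred _)) //.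
exact: leq_trans le_SP (ltnW lt_Pm).
Qed.

End SymmetricAdversary.

Theorem mainTheorem8 (n : nat) (A : {set {set 'I_n}}) :
  set0 \notin A -> symmetric_adv A ->
  setcon A = #|[set k : 'I_n.+1 | (1 <= k) && [exists S in A, #|S| == k]]|.
Proof.
move=> A0 Asym; rewrite /setcon setcon_fuel_live_sizes // cardsT card_ord //.
rewrite -sum1_card big_mkcond /=.
rewrite (eq_bigr (fun k : 'I_n.+1 => (0 < k) && live_size A k : nat)) => [|k _]; last first.
  by rewrite inE; case: (_ && _).
rewrite -(big_mkord xpredT (fun k => (0 < k) && live_size A k : nat)) big_ltn //=.
by apply: eq_big_nat => k /andP [k_gt0 _]; rewrite k_gt0.
Qed.
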